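(* Let $K\ge1$, $N$ and $s$ be integers with $0\le s<N-2$, let $X_0,\dots,X_{K-1}\in\mathbb{R}$, let $f:\mathbb{R}\to\mathbb{R}$, let $\alpha_i=\cos\frac{(2i+1)\pi}{2K}$ for $i=0,\dots,K-1$, define $$u(z)=\sum_{i=0}^{K-1}\frac{(-1)^i/(z-\alpha_i)}{\sum_{j=0}^{K-1}(-1)^j/(z-\alpha_j)}X_i$$ (extended continuously by $u(\alpha_i)=X_i$), and let $g(z)=f(u(z))$, assumed to have a continuous second derivative on $[-1,1]$. Let $\mathcal{F}\subset\{0,\dots,N\}$ with $|\mathcal F|=N+1-s$, let $n=N-s$, let $z_0>\dots>z_n$ be the points $\{\cos\frac{j\pi}{N}:j\in\mathcal F\}$, and let $$r_{\mathcal F}(z)=\sum_{i=0}^{n}\frac{(-1)^i/(z-z_i)}{\sum_{j=0}^n(-1)^j/(z-z_j)}\,g(z_i).$$ Set $R=\frac{(s+1)(s+3)\pi^2}{4}$ and $\|h\|=\max_{z\in[-1,1]}|h(z)|$. Then $$\|r_{\mathcal F}-g\|\le 2(1+R)\sin\Big(\frac{(s+1)\pi}{2N}\Big)\|g''\|$$ if $N-s$ is odd, and $$\|r_{\mathcal F}-g\|\le 2(1+R)\sin\Big(\frac{(s+1)\pi}{2N}\Big)\big(\|g''\|+\|g'\|\big)$$ if $N-s$ is even.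
   Context: $\|h\|$ denotes the maximum norm of a function over $[-1,1]$. The interpolation points $z_j$ are a subset, of size $N+1-s$, of the Chebyshev points of the second kind $\cos\frac{k\pi}{N}$, $k=0,\dots,N$ (the $s$ missing points correspond to straggling workers). *)

From Stdlib Require Import Reals Lra Lia.
From Coquelicot Require Import Coquelicot.
Open Scope R_scope.

Fixpoint node_index (x : nat -> R) (m : nat) (z : R) : option nat :=
  match m with
  | O => if Req_EM_T z (x O) then Some O else None
  | S m' => match node_index x m' z with
            | Some k => Some k
            | None => if Req_EM_T z (x m) then Some m else None
            end
  end.

(* Barycentric rational interpolant with weights (-1)^i at nodes x 0..x n
   and values v 0..v n, extended (by continuity) to the nodes by v k. *)
Definition bary (x : nat -> R) (n : nat) (v : nat -> R) (z : R) : R :=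
  match node_index x n z with
  | Some k => v k
  | None =>
      sum_f_R0 (fun i =>
        ((-1) ^ i / (z - x i)) / (sum_f_R0 (fun j => (-1) ^ j / (z - x j)) n)
        * v i) n
  end.

Definition alpha (K : nat) (i : nat) : R :=
  cos ((2 * INR i + 1) * PI / (2 * INR K)).

Definition u_enc (K : nat) (X : nat -> R) : R -> R :=
  bary (alpha K) (K - 1) X.

Definition is_derive_I (h : R -> R) (x l : R) : Prop :=
  filterlim (fun y => (h y - h x) / (y - x))
    (within (fun y => -1 <= y <= 1 /\ y <> x) (locally x)) (locally l).

Definition continuous_I (h : R -> R) (x : R) : Prop :=
  filterlim h (within (fun y => -1 <= y <= 1) (locally x)) (locally (h x)).

Definition supnorm (h : R -> R) : R :=
  real (Lub_Rbar (fun y => exists z, -1 <= z <= 1 /\ y = Rabs (h z))).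

From Stdlib Require Import Reals Lra Lia.
From Coquelicot Require Import Coquelicot.
Open Scope R_scope.

(* Away from the nodes z_i, writing D(z) = sum_i (-1)^i / (z - z_i), one has
     r(z) - g(z) = - ( sum_i (-1)^i psi(z_i) + g'(z) sum_i (-1)^i ) / D(z),
   where psi(t) = (g t - g z)/(t - z) - g'(z) is the secant defect.  The proof
   bounds numerator and denominator separately:
   - calculus on [-1,1] (a comparison principle from the mean value theorem)
     gives Taylor's estimate, hence |psi(t)| <= ||g''||/2 |t - z| and psi is
     ||g''||/2-Lipschitz; pairing consecutive terms of the alternating sum
     bounds the numerator by ||g''|| (n odd) or 2||g''|| + ||g'|| (n even);
   - for any decreasing nodes, |D(z)| is at least the dominant pair of terms
     of the nodes nearest to z; for the Chebyshev subset, trigonometric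
     estimates on cos(j pi/N) turn this into |D(z)| >= 1 / ((1 + R) S) with
     S = sin((s + 1) pi / (2N)). *)

(* Calculus on [-1,1]. *)

Lemma is_derive_I_eps (h : R -> R) x l :
  is_derive_I h x l <->
  (forall eps, 0 < eps -> exists d, 0 < d /\ forall y, -1 <= y <= 1 -> y <> x ->
     Rabs (y - x) < d -> Rabs ((h y - h x) / (y - x) - l) < eps).
Proof.
  unfold is_derive_I; rewrite filterlim_locally; split.
  - intros H eps Heps; destruct (H (mkposreal eps Heps)) as [d Hd].
    exists d; split; [apply cond_pos |]; intros y Hy Hyx Hd'.
    exact (Hd y Hd' (conj Hy Hyx)).
  - intros H eps; destruct (H eps (cond_pos eps)) as [d [Hd Hd']].
    exists (mkposreal d Hd); intros y Hb [Hy Hyx]; apply Hd'; auto.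
Qed.

Lemma continuous_I_eps (h : R -> R) x :
  continuous_I h x <->
  (forall eps, 0 < eps -> exists d, 0 < d /\ forall y, -1 <= y <= 1 ->
     Rabs (y - x) < d -> Rabs (h y - h x) < eps).
Proof.
  unfold continuous_I; rewrite filterlim_locally; split.
  - intros H eps Heps; destruct (H (mkposreal eps Heps)) as [d Hd].
    exists d; split; [apply cond_pos |]; intros y Hy Hd'; exact (Hd y Hd' Hy).
  - intros H eps; destruct (H eps (cond_pos eps)) as [d [Hd Hd']].
    exists (mkposreal d Hd); intros y Hb Hy; apply Hd'; auto.
Qed.

Lemma is_derive_I_plus_scal (p h : R -> R) x m l e :
  is_derive_I p x m -> is_derive_I h x l ->
  is_derive_I (fun t => p t + e * h t) x (m + e * l).
Proof.
  intros Hp Hh; unfold is_derive_I.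
  apply (filterlim_ext_loc (fun y => (p y - p x) / (y - x) + e * ((h y - h x) / (y - x)))).
  - exists (mkposreal 1 Rlt_0_1); intros y _ [_ Hyx].
    field; lra.
  - eapply filterlim_comp_2; [exact Hp | | apply (@filterlim_plus R_AbsRing R_NormedModule)].
    eapply filterlim_comp; [exact Hh | apply (@filterlim_scal_r R_AbsRing R_NormedModule)].
Qed.

Lemma is_derive_I_of_is_derive (h : R -> R) x l : is_derive h x l -> is_derive_I h x l.
Proof.
  intros Hd; apply is_derive_Reals in Hd; apply is_derive_I_eps; intros eps Heps.
  destruct (Hd eps Heps) as [d Hd']; exists d; split; [apply cond_pos |].
  intros y _ Hyx Hy; specialize (Hd' (y - x) ltac:(lra) Hy).
  replace (x + (y - x)) with y in Hd' by ring; exact Hd'.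
Qed.

Lemma is_derive_I_continuous (h : R -> R) x l : is_derive_I h x l -> continuous_I h x.
Proof.
  rewrite is_derive_I_eps, continuous_I_eps; intros H eps Heps.
  destruct (H 1 Rlt_0_1) as [d [Hd Hq]].
  assert (Hl : 0 < Rabs l + 1) by (pose proof (Rabs_pos l); lra).
  exists (Rmin d (eps / (Rabs l + 1))); split.
  { apply Rmin_pos; [lra | apply Rdiv_lt_0_compat; lra]. }
  intros y Hy Hyd; pose proof (Rmin_l d (eps / (Rabs l + 1))); pose proof (Rmin_r d (eps / (Rabs l + 1))).
  destruct (Req_dec y x) as [-> | Hne].
  { rewrite Rminus_diag, Rabs_R0; lra. }
  specialize (Hq y Hy Hne ltac:(lra)).
  (* the difference quotient stays below |l| + 1, so h y - h x = O(y - x) *)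
  assert (Hquot : Rabs ((h y - h x) / (y - x)) <= Rabs l + 1).
  { replace ((h y - h x) / (y - x)) with (((h y - h x) / (y - x) - l) + l) by ring.
    pose proof (Rabs_triang ((h y - h x) / (y - x) - l) l); lra. }
  replace (h y - h x) with ((h y - h x) / (y - x) * (y - x)) by (field; lra).
  rewrite Rabs_mult.
  apply Rle_lt_trans with ((Rabs l + 1) * Rabs (y - x)).
  { apply Rmult_le_compat_r; [apply Rabs_pos | exact Hquot]. }
  apply (Rmult_lt_reg_r (/ (Rabs l + 1))); [apply Rinv_0_lt_compat; lra |].
  replace ((Rabs l + 1) * Rabs (y - x) * / (Rabs l + 1)) with (Rabs (y - x)) by (field; lra).
  unfold Rdiv in Hyd; lra.
Qed.

Lemma is_derive_I_interior (h : R -> R) x l : -1 < x < 1 -> is_derive_I h x l ->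
  derivable_pt_lim h x l.
Proof.
  intros Hx Hd; rewrite is_derive_I_eps in Hd; intros eps Heps.
  destruct (Hd eps Heps) as [d [Hd0 Hd']].
  assert (Hm : 0 < Rmin d (Rmin (1 - x) (x + 1))) by (repeat apply Rmin_pos; lra).
  exists (mkposreal _ Hm); intros e He Hea; simpl in Hea.
  pose proof (Rmin_l d (Rmin (1 - x) (x + 1))); pose proof (Rmin_r d (Rmin (1 - x) (x + 1))).
  pose proof (Rmin_l (1 - x) (x + 1)); pose proof (Rmin_r (1 - x) (x + 1)).
  assert (He' : Rabs e < Rmin (1 - x) (x + 1)) by lra; apply Rabs_def2 in He'.
  specialize (Hd' (x + e)); replace (x + e - x) with e in Hd' by ring.
  apply Hd'; lra.
Qed.

(* Projection of R onto [-1,1]: h o clamp extends h to R, continuous (in the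
   usual sense) at every point of [-1,1] where h is continuous_I. *)
Definition clamp (x : R) : R := Rmax (-1) (Rmin 1 x).

Lemma clamp_in x : -1 <= clamp x <= 1.
Proof. unfold clamp, Rmax, Rmin; repeat destruct Rle_dec; lra. Qed.

Lemma clamp_id x : -1 <= x <= 1 -> clamp x = x.
Proof. unfold clamp, Rmax, Rmin; repeat destruct Rle_dec; lra. Qed.

Lemma clamp_lipschitz x y : Rabs (clamp y - clamp x) <= Rabs (y - x).
Proof.
  unfold clamp, Rmax, Rmin; repeat destruct Rle_dec; unfold Rabs;
    repeat destruct Rcase_abs; lra.
Qed.

Lemma continuous_I_clamp (h : R -> R) c : -1 <= c <= 1 -> continuous_I h c ->
  continuity_pt (fun t => h (clamp t)) c.
Proof.
  intros Hc1 Hc; apply continuity_pt_filterlim, filterlim_locally; intros eps.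
  rewrite continuous_I_eps in Hc; destruct (Hc eps (cond_pos eps)) as [d [Hd Hd']].
  exists (mkposreal d Hd); intros y Hb; rewrite (clamp_id c Hc1).
  apply Hd'; [apply clamp_in |].
  replace (clamp y - c) with (clamp y - clamp c) by (rewrite (clamp_id c Hc1); reflexivity).
  eapply Rle_lt_trans; [apply clamp_lipschitz | exact Hb].
Qed.

(* Extreme value theorem on [-1,1], hence ||h|| is a genuine bound. *)
Lemma continuous_I_bounded (h : R -> R) :
  (forall x, -1 <= x <= 1 -> continuous_I h x) ->
  exists B, forall x, -1 <= x <= 1 -> Rabs (h x) <= B.
Proof.
  intros Hc.
  assert (Hcont : forall c, -1 <= c <= 1 -> continuity_pt (fun t => Rabs (h (clamp t))) c).
  { intros c Hc1; apply (continuity_pt_comp (fun t => h (clamp t)) Rabs).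
    - apply continuous_I_clamp; [exact Hc1 | apply Hc, Hc1].
    - apply Rcontinuity_abs. }
  destruct (continuity_ab_maj _ (-1) 1 ltac:(lra) Hcont) as [M [HM _]].
  exists (Rabs (h (clamp M))); intros x Hx.
  specialize (HM x Hx); rewrite clamp_id in HM; auto.
Qed.

Lemma supnorm_ub (h : R -> R) :
  (forall x, -1 <= x <= 1 -> continuous_I h x) ->
  forall x, -1 <= x <= 1 -> Rabs (h x) <= supnorm h.
Proof.
  intros Hc x Hx; destruct (continuous_I_bounded h Hc) as [B HB]; unfold supnorm.
  set (E := fun y => exists z, -1 <= z <= 1 /\ y = Rabs (h z)).
  destruct (Lub_Rbar_correct E) as [Hub Hlub].
  assert (Hle : Rbar_le (Lub_Rbar E) B) by (apply Hlub; intros y [z [Hz ->]]; exact (HB z Hz)).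
  assert (Hge : Rbar_le (Rabs (h x)) (Lub_Rbar E)) by (apply Hub; exists x; auto).
  destruct (Lub_Rbar E); simpl in *; tauto || lra.
Qed.

Lemma supnorm_nonneg (h : R -> R) : 0 <= supnorm h.
Proof.
  unfold supnorm; set (E := fun y => exists z, -1 <= z <= 1 /\ y = Rabs (h z)).
  destruct (Lub_Rbar_correct E) as [Hub _].
  assert (Hge : Rbar_le (Rabs (h 0)) (Lub_Rbar E)) by (apply Hub; exists 0; split; [lra | auto]).
  pose proof (Rabs_pos (h 0)).
  destruct (Lub_Rbar E); simpl in *; tauto || lra.
Qed.

(* A function with nonnegative derivative on [a,b] is nondecreasing there:
   the mean value theorem applied to the clamped extension of h. *)
Lemma nonneg_derivative_monotone (h h' : R -> R) a b : -1 <= a <= b -> b <= 1 ->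
  (forall x, a <= x <= b -> is_derive_I h x (h' x) /\ 0 <= h' x) -> h a <= h b.
Proof.
  intros Hab Hb Hd.
  destruct (MVT_gen (fun t => h (clamp t)) a b h') as [c [Hc Heq]];
    rewrite ?Rmin_left, ?Rmax_right in * by lra.
  - intros x Hx; apply is_derive_Reals.
    apply (derivable_pt_lim_locally_ext h _ x (-1) 1); [lra | intros; rewrite clamp_id; lra |].
    apply is_derive_I_interior; [lra | apply Hd; lra].
  - intros x Hx; apply continuous_I_clamp; [lra |].
    apply (is_derive_I_continuous h x (h' x)), Hd, Hx.
  - rewrite !clamp_id in Heq by lra.
    assert (0 <= h' c * (b - a)) by (apply Rmult_le_pos; [apply Hd | ]; lra).
    lra.
Qed.

(* Comparison principle: |h'| <= p' on [a,b] bounds the increment of h by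
   that of p (apply monotonicity to p - h and p + h). *)
Lemma derivative_comparison (h h' p p' : R -> R) a b : -1 <= a <= b -> b <= 1 ->
  (forall x, a <= x <= b ->
     is_derive_I h x (h' x) /\ is_derive_I p x (p' x) /\ Rabs (h' x) <= p' x) ->
  Rabs (h b - h a) <= p b - p a.
Proof.
  intros Hab Hb Hd.
  assert (Hmono : forall e, Rabs e <= 1 -> p a + e * h a <= p b + e * h b).
  { intros e He.
    apply (nonneg_derivative_monotone (fun t => p t + e * h t) (fun x => p' x + e * h' x)); auto.
    intros x Hx; destruct (Hd x Hx) as [Hh [Hp Hle]]; split.
    - apply is_derive_I_plus_scal; assumption.
    -
      assert (Heh : Rabs (e * h' x) <= p' x).
      { rewrite Rabs_mult; apply Rle_trans with (1 * Rabs (h' x)); [| lra].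
        apply Rmult_le_compat_r; [apply Rabs_pos | exact He]. }
      apply Rabs_le_between in Heh; lra. }
  pose proof (Hmono 1 ltac:(apply Rabs_le; lra)).
  pose proof (Hmono (-1) ltac:(apply Rabs_le; lra)).
  apply Rabs_le; lra.
Qed.

Section SecondDerivativeBounds.
Variables (g g1 g2 : R -> R) (M2 : R).
Hypothesis Hg : forall z, -1 <= z <= 1 -> is_derive_I g z (g1 z).
Hypothesis Hg1 : forall z, -1 <= z <= 1 -> is_derive_I g1 z (g2 z).
Hypothesis HM2 : forall z, -1 <= z <= 1 -> Rabs (g2 z) <= M2.

Lemma derivative_lipschitz a b : -1 <= a <= 1 -> -1 <= b <= 1 ->
  Rabs (g1 b - g1 a) <= M2 * Rabs (b - a).
Proof.
  assert (Hle : forall a b, -1 <= a -> a <= b -> b <= 1 -> Rabs (g1 b - g1 a) <= M2 * (b - a)).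
  { intros a' b' Ha' Hab Hb'.
    replace (M2 * (b' - a')) with (M2 * b' - M2 * a') by ring.
    apply (derivative_comparison g1 g2 (fun t => M2 * t) (fun _ => M2)); [lra | lra |].
    intros x Hx; split; [apply Hg1; lra | split; [| apply HM2; lra]].
    apply is_derive_I_of_is_derive; auto_derive; auto; ring. }
  intros Ha Hb; destruct (Rle_dec a b).
  - rewrite (Rabs_right (b - a)) by lra; apply Hle; lra.
  - rewrite Rabs_minus_sym, (Rabs_left (b - a)), Ropp_minus_distr by lra; apply Hle; lra.
Qed.

Lemma taylor_remainder c t : -1 <= c <= 1 -> -1 <= t <= 1 ->
  Rabs (g t - g c - g1 c * (t - c)) <= M2 / 2 * ((t - c) * (t - c)).
Proof.
  intros Hc Ht.
  (* h u = g u - g1 c * u has derivative g1 u - g1 c, of size at most M2 |u - c| *)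
  set (h := fun u => g u + - g1 c * u).
  assert (Hh : forall u, -1 <= u <= 1 ->
            is_derive_I h u (g1 u - g1 c) /\ Rabs (g1 u - g1 c) <= M2 * Rabs (u - c)).
  { intros u Hu; split; [| apply derivative_lipschitz; assumption].
    replace (g1 u - g1 c) with (g1 u + - g1 c * 1) by ring.
    apply is_derive_I_plus_scal; [apply Hg; exact Hu |].
    apply is_derive_I_of_is_derive; auto_derive; auto. }
  replace (g t - g c - g1 c * (t - c)) with (h t - h c) by (unfold h; ring).
  destruct (Rle_dec c t).
  - replace (M2 / 2 * ((t - c) * (t - c)))
      with (M2 / 2 * ((t - c) * (t - c)) - M2 / 2 * ((c - c) * (c - c))) by ring.
    apply (derivative_comparison h (fun u => g1 u - g1 c)
             (fun u => M2 / 2 * ((u - c) * (u - c))) (fun u => M2 * (u - c))); [lra | lra |].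
    intros u Hu; destruct (Hh u ltac:(lra)) as [Hd Hb]; split; [exact Hd | split].
    + apply is_derive_I_of_is_derive; auto_derive; auto; field.
    + rewrite (Rabs_right (u - c)) in Hb by lra; exact Hb.
  - rewrite Rabs_minus_sym.
    replace (M2 / 2 * ((t - c) * (t - c)))
      with (- (M2 / 2) * ((c - c) * (c - c)) - - (M2 / 2) * ((t - c) * (t - c))) by ring.
    apply (derivative_comparison h (fun u => g1 u - g1 c)
             (fun u => - (M2 / 2) * ((u - c) * (u - c))) (fun u => M2 * (c - u))); [lra | lra |].
    intros u Hu; destruct (Hh u ltac:(lra)) as [Hd Hb]; split; [exact Hd | split].
    + apply is_derive_I_of_is_derive; auto_derive; auto; field.
    + rewrite (Rabs_left1 (u - c)) in Hb by lra; lra.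
Qed.

End SecondDerivativeBounds.

(* The defect of the secant slope of g on [z,t] relative to the tangent slope
   at z.  The interpolation error is an alternating sum of these defects. *)
Definition secant_defect (g g1 : R -> R) (z t : R) : R := (g t - g z) / (t - z) - g1 z.

Lemma Rabs_div_le (x y b : R) : y <> 0 -> Rabs x <= b -> Rabs (x / y) <= b / Rabs y.
Proof.
  intros Hy Hx; unfold Rdiv; rewrite Rabs_mult, Rabs_inv.
  apply Rmult_le_compat_r; [left; apply Rinv_0_lt_compat, Rabs_pos_lt; exact Hy | exact Hx].
Qed.

Lemma sqr_Rabs (x : R) : x * x = Rabs x * Rabs x.
Proof. rewrite <- Rabs_mult, Rabs_right; [ring | apply Rle_ge, Rle_0_sqr]. Qed.

Section SecantDefect.
Variables (g g1 g2 : R -> R) (M2 : R).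
Hypothesis Hg : forall z, -1 <= z <= 1 -> is_derive_I g z (g1 z).
Hypothesis Hg1 : forall z, -1 <= z <= 1 -> is_derive_I g1 z (g2 z).
Hypothesis HM2 : forall z, -1 <= z <= 1 -> Rabs (g2 z) <= M2.

Let taylor := taylor_remainder g g1 g2 M2 Hg Hg1 HM2.

Lemma secant_defect_bound z t : -1 <= z <= 1 -> -1 <= t <= 1 -> t <> z ->
  Rabs (secant_defect g g1 z t) <= M2 / 2 * Rabs (t - z).
Proof.
  intros Hz Ht Hne; unfold secant_defect.
  replace ((g t - g z) / (t - z) - g1 z) with ((g t - g z - g1 z * (t - z)) / (t - z))
    by (field; lra).
  eapply Rle_trans; [apply Rabs_div_le; [lra | exact (taylor z t Hz Ht)] |].
  assert (0 < Rabs (t - z)) by (apply Rabs_pos_lt; lra).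
  rewrite sqr_Rabs; right; field; lra.
Qed.

Lemma secant_defect_lipschitz_same_side z a b :
  -1 <= z <= 1 -> -1 <= a <= 1 -> -1 <= b <= 1 ->
  0 < (a - z) * (b - z) -> Rabs (b - z) <= Rabs (a - z) ->
  Rabs (secant_defect g g1 z a - secant_defect g g1 z b) <= M2 / 2 * Rabs (a - b).
Proof.
  intros Hz Ha Hb Hs Hl.
  assert (Hu : a - z <> 0) by (intro H; rewrite H in Hs; lra).
  assert (Hv : b - z <> 0) by (intro H; rewrite H in Hs; lra).
  (* expand both secants around b *)
  unfold secant_defect.
  replace ((g a - g z) / (a - z) - g1 z - ((g b - g z) / (b - z) - g1 z))
   with ((g a - g b - g1 b * (a - b)) / (a - z) +
         (g z - g b - g1 b * (z - b)) * (a - b) / ((a - z) * (b - z)))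
   by (field; lra).
  eapply Rle_trans; [apply Rabs_triang |].
  eapply Rle_trans; [apply Rplus_le_compat; apply Rabs_div_le |].
  - exact Hu.
  - exact (taylor b a Hb Ha).
  - apply Rmult_integral_contrapositive_currified; assumption.
  - rewrite Rabs_mult; apply Rmult_le_compat_r; [apply Rabs_pos | exact (taylor b z Hb Hz)].
  - assert (Hd : Rabs (a - b) + Rabs (b - z) = Rabs (a - z)).
    { destruct (Rle_dec 0 (a - z)).
      - assert (0 < b - z) by nra; unfold Rabs in *; repeat destruct Rcase_abs; lra.
      - assert (b - z < 0) by nra; unfold Rabs in *; repeat destruct Rcase_abs; lra. }
    assert (0 < Rabs (a - z)) by (apply Rabs_pos_lt; auto).
    assert (0 < Rabs (b - z)) by (apply Rabs_pos_lt; auto).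
    rewrite Rabs_mult, (sqr_Rabs (z - b)), (sqr_Rabs (a - b)), (Rabs_minus_sym z b).
    right; rewrite <- Hd; field; lra.
Qed.

Lemma secant_defect_lipschitz z a b : -1 <= z <= 1 -> -1 <= a <= 1 -> -1 <= b <= 1 ->
  a <> z -> b <> z ->
  Rabs (secant_defect g g1 z a - secant_defect g g1 z b) <= M2 / 2 * Rabs (a - b).
Proof.
  intros Hz Ha Hb Haz Hbz.
  destruct (Rlt_dec 0 ((a - z) * (b - z))) as [Hs | Hs].
  - destruct (Rle_dec (Rabs (b - z)) (Rabs (a - z))).
    + apply secant_defect_lipschitz_same_side; auto.
    + rewrite Rabs_minus_sym, (Rabs_minus_sym a b).
      apply secant_defect_lipschitz_same_side; auto; [nra | lra].
  - (* z lies between a and b: bound each defect separately *)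
    eapply Rle_trans; [apply Rabs_triang |]; rewrite Rabs_Ropp.
    eapply Rle_trans; [apply Rplus_le_compat; apply secant_defect_bound; auto |].
    assert (Hd : Rabs (a - z) + Rabs (b - z) = Rabs (a - b)).
    { assert ((a - z) * (b - z) < 0).
      { destruct (Req_dec ((a - z) * (b - z)) 0) as [H0 | H0];
          [apply Rmult_integral in H0; lra | lra]. }
      destruct (Rle_dec 0 (a - z)).
      - assert (b - z < 0) by nra; unfold Rabs in *; repeat destruct Rcase_abs; lra.
      - assert (0 < b - z) by nra; unfold Rabs in *; repeat destruct Rcase_abs; lra. }
    rewrite <- Hd; lra.
Qed.

End SecantDefect.

Lemma pow_m1_sqr k : (-1) ^ k * (-1) ^ k = 1.
Proof. rewrite <- Rpow_mult_distr; replace (-1 * -1) with 1 by ring; apply pow1. Qed.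

Lemma pow_m1_even m : (-1) ^ (2 * m) = 1.
Proof. rewrite pow_mult; replace ((-1) ^ 2) with 1 by ring; apply pow1. Qed.

Lemma Rabs_pow_m1 k : Rabs ((-1) ^ k) = 1.
Proof. rewrite <- RPow_abs, Rabs_left by lra; replace (- -1) with 1 by ring; apply pow1. Qed.

Lemma Rabs_sign_mult k x : Rabs ((-1) ^ k * x) = Rabs x.
Proof. rewrite Rabs_mult, Rabs_pow_m1; ring. Qed.

Lemma sum_opp (a : nat -> R) m : sum_f_R0 (fun i => - a i) m = - sum_f_R0 a m.
Proof. induction m as [| m IH]; simpl; [| rewrite IH]; ring. Qed.

Lemma alternating_sum_decreasing m : forall a : nat -> R,
  (forall i, (i < m)%nat -> a (S i) <= a i) -> (forall i, (i <= m)%nat -> 0 <= a i) ->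
  0 <= sum_f_R0 (fun i => (-1) ^ i * a i) m <= a 0%nat /\
  ((1 <= m)%nat -> a 0%nat - a 1%nat <= sum_f_R0 (fun i => (-1) ^ i * a i) m).
Proof.
  induction m as [| m IH]; intros a Hd Hp.
  - simpl; pose proof (Hp 0%nat (le_n 0)); split; [lra | lia].
  - rewrite decomp_sum by lia; simpl pred.
    replace (sum_f_R0 (fun i => (-1) ^ S i * a (S i)) m)
      with (- sum_f_R0 (fun i => (-1) ^ i * a (S i)) m)
      by (rewrite <- sum_opp; apply sum_eq; intros; simpl; ring).
    destruct (IH (fun i => a (S i))) as [[H1 H2] _];
      [intros i Hi; apply Hd; lia | intros i Hi; apply Hp; lia |].
    pose proof (Hd 0%nat ltac:(lia)); simpl pow.
    split; [split | intros _]; lra.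
Qed.

Lemma alternating_sum_increasing k : forall a : nat -> R,
  (forall i, (i < k)%nat -> a i <= a (S i)) -> (forall i, (i <= k)%nat -> 0 <= a i) ->
  0 <= (-1) ^ k * sum_f_R0 (fun i => (-1) ^ i * a i) k <= a k /\
  ((1 <= k)%nat -> a k - a (k - 1)%nat <= (-1) ^ k * sum_f_R0 (fun i => (-1) ^ i * a i) k).
Proof.
  induction k as [| k IH]; intros a Hi Hp.
  - simpl; pose proof (Hp 0%nat (le_n 0)); split; [lra | lia].
  - rewrite tech5.
    destruct (IH a) as [[H1 H2] _]; [intros i H; apply Hi; lia | intros i H; apply Hp; lia |].
    pose proof (Hi k ltac:(lia)).
    replace ((-1) ^ S k * (sum_f_R0 (fun i => (-1) ^ i * a i) k + (-1) ^ S k * a (S k)))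
      with (a (S k) - (-1) ^ k * sum_f_R0 (fun i => (-1) ^ i * a i) k)
      by (simpl; pose proof (pow_m1_sqr k); nra).
    replace (S k - 1)%nat with k by lia.
    split; [split | intros _]; lra.
Qed.

Lemma alternating_sum_pairs (y z : nat -> R) (c : R) n : 0 <= c ->
  (forall i, (i < n)%nat -> z (S i) <= z i) ->
  (forall i j, (i <= n)%nat -> (j <= n)%nat -> Rabs (y i - y j) <= c * Rabs (z i - z j)) ->
  forall m, (2 * m + 1 <= n)%nat ->
  Rabs (sum_f_R0 (fun i => (-1) ^ i * y i) (2 * m + 1)) <= c * (z 0%nat - z (2 * m + 1)%nat).
Proof.
  intros Hc Hz Hy.
  assert (Hpair : forall i, (S i <= n)%nat -> Rabs (y i - y (S i)) <= c * (z i - z (S i))).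
  { intros i Hi; pose proof (Hz i Hi).
    rewrite <- (Rabs_right (z i - z (S i))) by lra; apply Hy; lia. }
  induction m as [| m IH]; intros Hm.
  - simpl; replace (1 * y 0%nat + -1 * 1 * y 1%nat) with (y 0%nat - y 1%nat) by ring.
    apply Hpair; lia.
  - replace (2 * S m + 1)%nat with (S (S (2 * m + 1))) by lia; rewrite !tech5.
    set (p := S (2 * m + 1)).
    assert (Hp : (-1) ^ p = 1)
      by (unfold p; replace (S (2 * m + 1)) with (2 * (m + 1))%nat by lia; apply pow_m1_even).
    rewrite <- tech_pow_Rmult, Hp, Rplus_assoc.
    eapply Rle_trans; [apply Rabs_triang |].
    replace (1 * y p + -1 * 1 * y (S p)) with (y p - y (S p)) by ring.
    pose proof (IH ltac:(lia)); pose proof (Hpair p ltac:(unfold p; lia)).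
    pose proof (Hz (2 * m + 1)%nat ltac:(lia)) as Hzp; change (S (2 * m + 1)) with p in Hzp.
    nra.
Qed.

Lemma alternating_sum_ones n : sum_f_R0 (fun i => (-1) ^ i) n = if Nat.odd n then 0 else 1.
Proof.
  induction n as [| n IH]; [simpl; ring |].
  rewrite tech5, IH, Nat.odd_succ, <- Nat.negb_odd.
  destruct (Nat.odd n) eqn:E; simpl negb.
  - apply Nat.odd_spec in E; destruct E as [m ->].
    replace (S (2 * m + 1)) with (2 * (m + 1))%nat by lia; rewrite pow_m1_even; ring.
  - assert (Hev : Nat.even n = true) by (rewrite <- Nat.negb_odd, E; reflexivity).
    apply Nat.even_spec in Hev; destruct Hev as [m ->].
    replace (S (2 * m)) with (2 * m + 1)%nat by lia.
    rewrite pow_add, pow_m1_even; ring.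
Qed.

Lemma node_index_some x m z k : node_index x m z = Some k -> z = x k.
Proof.
  induction m as [| m IH]; simpl.
  - destruct (Req_EM_T z (x 0%nat)); intros H; inversion H; subst; auto.
  - destruct (node_index x m z) eqn:E.
    + intros H; inversion H; subst; apply IH; reflexivity.
    + destruct (Req_EM_T z (x (S m))); intros H; inversion H; subst; auto.
Qed.

Lemma node_index_none x m z : node_index x m z = None -> forall i, (i <= m)%nat -> z <> x i.
Proof.
  induction m as [| m IH]; simpl.
  - destruct (Req_EM_T z (x 0%nat)); intros H; [discriminate |].
    intros i Hi; replace i with 0%nat by lia; assumption.
  - destruct (node_index x m z) eqn:E; [discriminate |].
    destruct (Req_EM_T z (x (S m))); intros H; [discriminate |].
    intros i Hi; destruct (Nat.eq_dec i (S m)) as [-> | Hne]; [assumption |].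
    apply IH; [reflexivity | lia].
Qed.

Definition Dsum (x : nat -> R) (n : nat) (z : R) : R :=
  sum_f_R0 (fun j => (-1) ^ j / (z - x j)) n.

Lemma bary_error_formula (g g1 : R -> R) (x : nat -> R) n z :
  (forall i, (i <= n)%nat -> z <> x i) -> Dsum x n z <> 0 ->
  sum_f_R0 (fun i => ((-1) ^ i / (z - x i)) / Dsum x n z * g (x i)) n - g z
  = - (sum_f_R0 (fun i => (-1) ^ i * secant_defect g g1 z (x i)) n
       + g1 z * sum_f_R0 (fun i => (-1) ^ i) n) / Dsum x n z.
Proof.
  intros Hnn HD; set (D := Dsum x n z).
  (* the weights sum to one, so g(z) is their average against itself *)
  assert (Hgz : g z = sum_f_R0 (fun i => ((-1) ^ i / (z - x i)) / D * g z) n).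
  { rewrite <- (scal_sum _ _ (g z)).
    replace (sum_f_R0 (fun i => (-1) ^ i / (z - x i) / D) n) with (D / D); [field; exact HD |].
    unfold D, Dsum, Rdiv at 1; rewrite Rmult_comm, scal_sum.
    apply sum_eq; intros; unfold Rdiv; ring. }
  rewrite Hgz at 1; rewrite <- minus_sum.
  transitivity (sum_f_R0 (fun i => - ((-1) ^ i * secant_defect g g1 z (x i) + g1 z * (-1) ^ i) / D) n).
  - apply sum_eq; intros i Hi; unfold secant_defect.
    assert (z - x i <> 0) by (pose proof (Hnn i Hi); lra).
    field; repeat split; (exact HD || lra).
  - clearbody D; clear Hgz Hnn HD.
    induction n as [| n IH]; simpl; [| rewrite IH]; unfold Rdiv; ring.
Qed.

Lemma one_div_le_contravar u v : 0 < u -> u <= v -> 1 / v <= 1 / u.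
Proof. intros; unfold Rdiv; rewrite !Rmult_1_l; apply Rinv_le_contravar; assumption. Qed.

Lemma one_div_nonneg u : 0 < u -> 0 <= 1 / u.
Proof. intros; unfold Rdiv; rewrite Rmult_1_l; left; apply Rinv_0_lt_compat; assumption. Qed.

(* Lower bounds for |D(z)| at a point z that is not a node, for arbitrary
   strictly decreasing nodes x_0 > ... > x_n: the alternating sum is bounded
   below by its dominant pair of terms, those of the nodes nearest to z. *)
Section DenominatorLowerBounds.
Variables (x : nat -> R) (n : nat) (z : R).
Hypothesis Hdec : forall i, (i < n)%nat -> x (S i) < x i.

Lemma nodes_decreasing i j : (i < j)%nat -> (j <= n)%nat -> x j < x i.
Proof.
  intros Hij Hj; induction j as [| j IH]; [lia |].
  destruct (Nat.eq_dec i j) as [-> | Hne]; [apply Hdec; lia |].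
  apply Rlt_trans with (x j); [apply Hdec; lia | apply IH; lia].
Qed.

Lemma nodes_nonincreasing i j : (i <= j)%nat -> (j <= n)%nat -> x j <= x i.
Proof.
  intros Hij Hj; destruct (Nat.eq_dec i j) as [-> | Hne]; [lra |].
  left; apply nodes_decreasing; lia.
Qed.

Lemma Dsum_above : (1 <= n)%nat -> x 0%nat < z ->
  1 / (z - x 0%nat) - 1 / (z - x 1%nat) <= Rabs (Dsum x n z).
Proof.
  intros Hn Hz.
  assert (Hle : forall i, (i <= n)%nat -> x i <= x 0%nat)
    by (intros; apply nodes_nonincreasing; lia).
  destruct (alternating_sum_decreasing n (fun i => 1 / (z - x i))) as [[H1 _] H3].
  - intros i Hi; pose proof (Hle i ltac:(lia)); pose proof (Hdec i Hi).
    apply one_div_le_contravar; lra.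
  - intros i Hi; pose proof (Hle i Hi); apply one_div_nonneg; lra.
  - replace (Dsum x n z) with (sum_f_R0 (fun i => (-1) ^ i * (1 / (z - x i))) n)
      by (apply sum_eq; intros; unfold Rdiv; ring).
    rewrite Rabs_right by lra; apply H3; exact Hn.
Qed.

Lemma Dsum_below : (1 <= n)%nat -> z < x n ->
  1 / (x n - z) - 1 / (x (n - 1)%nat - z) <= Rabs (Dsum x n z).
Proof.
  intros Hn Hz.
  assert (Hle : forall i, (i <= n)%nat -> x n <= x i)
    by (intros; apply nodes_nonincreasing; lia).
  destruct (alternating_sum_increasing n (fun i => 1 / (x i - z))) as [[H1 _] H3].
  - intros i Hi; pose proof (Hle (S i) ltac:(lia)); pose proof (Hdec i Hi).
    apply one_div_le_contravar; lra.
  - intros i Hi; pose proof (Hle i Hi); apply one_div_nonneg; lra.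
  - replace (Dsum x n z) with (- sum_f_R0 (fun i => (-1) ^ i * (1 / (x i - z))) n).
    + rewrite Rabs_Ropp, <- (Rabs_sign_mult n), Rabs_right by lra; apply H3; exact Hn.
    + rewrite <- sum_opp; apply sum_eq; intros i Hi.
      pose proof (Hle i Hi); field; lra.
Qed.

Lemma Dsum_gap_split k : (k < n)%nat -> x (S k) < z < x k ->
  exists A B, Rabs (Dsum x n z) = A + B /\ 0 <= A /\ 0 <= B /\
    (k = 0%nat -> A = 1 / (x 0%nat - z)) /\
    ((1 <= k)%nat -> 1 / (x k - z) - 1 / (x (k - 1)%nat - z) <= A) /\
    (S k = n -> B = 1 / (z - x n)) /\
    ((S k < n)%nat -> 1 / (z - x (S k)) - 1 / (z - x (S (S k))) <= B).
Proof.
  intros Hk [Hz1 Hz2].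
  assert (HleL : forall i, (i <= k)%nat -> x k <= x i) by (intros; apply nodes_nonincreasing; lia).
  assert (HleR : forall m, (m <= n - S k)%nat -> x (S k + m)%nat <= x (S k))
    by (intros; apply nodes_nonincreasing; lia).
  destruct (alternating_sum_increasing k (fun i => 1 / (x i - z))) as [[HA _] HA'].
  { intros i Hi; pose proof (HleL (S i) Hi); pose proof (Hdec i ltac:(lia)).
    apply one_div_le_contravar; lra. }
  { intros i Hi; pose proof (HleL i Hi); apply one_div_nonneg; lra. }
  destruct (alternating_sum_decreasing (n - S k) (fun m => 1 / (z - x (S k + m)%nat)))
    as [[HB _] HB'].
  { intros m Hm; pose proof (HleR m ltac:(lia)); pose proof (Hdec (S k + m)%nat ltac:(lia)).
    replace (S k + S m)%nat with (S (S k + m)) by lia.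
    apply one_div_le_contravar; lra. }
  { intros m Hm; pose proof (HleR m Hm); apply one_div_nonneg; lra. }
  set (SA := sum_f_R0 (fun i => (-1) ^ i * (1 / (x i - z))) k) in *.
  set (SB := sum_f_R0 (fun m => (-1) ^ m * (1 / (z - x (S k + m)%nat))) (n - S k)) in *.
  assert (HD : Dsum x n z = - SA + (-1) ^ S k * SB).
  { unfold Dsum; rewrite (tech2 _ k n Hk); f_equal.
    - unfold SA; rewrite <- sum_opp; apply sum_eq; intros i Hi.
      pose proof (HleL i Hi); field; lra.
    - unfold SB; rewrite scal_sum; apply sum_eq; intros m Hm.
      pose proof (HleR m Hm); rewrite pow_add; field; lra. }
  exists ((-1) ^ k * SA), SB; split; [| split; [lra | split; [lra | split; [| split; [| split]]]]].
  - rewrite <- (Rabs_sign_mult (S k)), HD, Rabs_right;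
      simpl pow; pose proof (pow_m1_sqr k); nra.
  - intros ->; unfold SA; simpl; ring.
  - intros H1; specialize (HA' H1); cbv beta in HA'; exact HA'.
  - intros Hn; unfold SB; replace (n - S k)%nat with 0%nat by lia; simpl.
    rewrite Nat.add_0_r, Hn; ring.
  - intros Hn; specialize (HB' ltac:(lia)); cbv beta in HB'.
    rewrite Nat.add_0_r, Nat.add_1_r in HB'; exact HB'.
Qed.

End DenominatorLowerBounds.

Lemma find_gap (x : nat -> R) n z : (forall i, (i <= n)%nat -> z <> x i) ->
  z < x 0%nat -> x n < z -> exists k, (k < n)%nat /\ x (S k) < z < x k.
Proof.
  intros Hnn H0 Hn.
  assert (Hscan : forall m, (m <= n)%nat ->
            z < x m \/ exists k, (k < m)%nat /\ x (S k) < z < x k).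
  { induction m as [| m IH]; intros Hm; [left; exact H0 |].
    destruct (IH ltac:(lia)) as [Hlt | [k [Hk Hzk]]].
    - destruct (Rlt_dec z (x (S m))) as [Hlt' | Hge]; [left; exact Hlt' |].
      right; exists m; split; [lia |]; pose proof (Hnn (S m) Hm); lra.
    - right; exists k; split; [lia | exact Hzk]. }
  destruct (Hscan n (le_n n)) as [Hlt | Hgap]; [lra | exact Hgap].
Qed.

Lemma sin_le_mono a b : 0 <= a -> a <= b -> b <= PI / 2 -> sin a <= sin b.
Proof.
  intros; destruct (Req_dec a b) as [-> | Hne]; [lra |].
  left; apply sin_increasing_1; lra.
Qed.

Lemma sin_add_le a b : 0 <= sin a -> 0 <= sin b -> sin (a + b) <= sin a + sin b.
Proof. intros; rewrite sin_plus; pose proof (COS_bound a); pose proof (COS_bound b); nra. Qed.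

(* The Chebyshev points of the second kind cos(j pi/N), written through the
   half-angle theta = pi/(2N) so that differences factor into sines. *)
Section ChebyshevPoints.
Variable N : nat.
Hypothesis HN : (1 <= N)%nat.

Definition theta : R := PI / (2 * INR N).
Definition cheb (j : nat) : R := cos (INR j * PI / INR N).

Lemma INR_N_pos : 0 < INR N.
Proof. apply lt_0_INR; lia. Qed.

Lemma theta_pos : 0 < theta.
Proof. unfold theta; pose proof INR_N_pos; pose proof PI_RGT_0; apply Rdiv_lt_0_compat; lra. Qed.

Lemma theta_N : 2 * INR N * theta = PI.
Proof. unfold theta; pose proof INR_N_pos; field; lra. Qed.

Lemma cheb_double j : cheb j = cos (2 * (INR j * theta)).
Proof. unfold cheb, theta; f_equal; pose proof INR_N_pos; field; lra. Qed.

Lemma sin_theta_nonneg m : (m <= 2 * N)%nat -> 0 <= sin (INR m * theta).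
Proof.
  intros Hm; pose proof theta_pos; apply sin_ge_0.
  - apply Rmult_le_pos; [apply pos_INR | lra].
  - rewrite <- theta_N; apply le_INR in Hm; rewrite mult_INR in Hm; simpl in Hm; nra.
Qed.

Lemma sin_theta_mult_le m : (m <= 2 * N)%nat -> sin (INR m * theta) <= INR m * sin theta.
Proof.
  induction m as [| m IH]; intros Hm.
  - simpl; rewrite Rmult_0_l, sin_0; lra.
  - rewrite S_INR; replace ((INR m + 1) * theta) with (INR m * theta + theta) by ring.
    eapply Rle_trans; [apply sin_add_le |].
    + apply sin_theta_nonneg; lia.
    + replace theta with (INR 1 * theta) by (simpl; ring); apply sin_theta_nonneg; lia.
    + specialize (IH ltac:(lia)); lra.
Qed.

Lemma sin_theta_ge m : (1 <= m)%nat -> (m + 1 <= 2 * N)%nat -> sin theta <= sin (INR m * theta).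
Proof.
  intros H1 H2; pose proof theta_pos; pose proof theta_N.
  assert (Hm1 : 1 <= INR m) by (apply (le_INR 1); exact H1).
  assert (Hm2 : INR m + 1 <= 2 * INR N)
    by (apply le_INR in H2; rewrite plus_INR, mult_INR in H2; simpl in H2; lra).
  destruct (Rle_dec (INR m * theta) (PI / 2)).
  - apply sin_le_mono; nra.
  - rewrite <- (sin_PI_x (INR m * theta)); apply sin_le_mono; nra.
Qed.

Lemma cheb_diff j j' :
  cheb j - cheb j' = 2 * sin (INR (j + j') * theta) * sin ((INR j' - INR j) * theta).
Proof.
  rewrite !cheb_double, form2, plus_INR.
  replace ((2 * (INR j * theta) - 2 * (INR j' * theta)) / 2)
    with (- ((INR j' - INR j) * theta)) by field.
  replace ((2 * (INR j * theta) + 2 * (INR j' * theta)) / 2)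
    with ((INR j + INR j') * theta) by field.
  rewrite sin_neg; ring.
Qed.

Lemma one_sub_cheb j : 1 - cheb j = 2 * sin (INR j * theta) * sin (INR j * theta).
Proof. rewrite cheb_double, cos_2a_sin; ring. Qed.

Lemma cheb_reflect t : (t <= N)%nat -> cheb (N - t) = - cheb t.
Proof.
  intros Ht; unfold cheb; rewrite minus_INR by exact Ht; pose proof INR_N_pos.
  replace ((INR N - INR t) * PI / INR N) with (- (INR t * PI / INR N) + PI) by (field; lra).
  rewrite neg_cos, cos_neg; reflexivity.
Qed.

Lemma cheb_lt j j' : (j < j')%nat -> (j' <= N)%nat -> cheb j' < cheb j.
Proof.
  intros H1 H2; unfold cheb; pose proof INR_N_pos; pose proof PI_RGT_0.
  assert (INR j < INR j') by (apply lt_INR; exact H1).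
  assert (INR j' <= INR N) by (apply le_INR; exact H2).
  pose proof (pos_INR j).
  assert (Hk : forall k, 0 <= INR k <= INR N -> 0 <= INR k * PI / INR N <= PI).
  { intros k Hk; split; [apply Rmult_le_pos; [nra | left; apply Rinv_0_lt_compat; lra] |].
    apply (Rmult_le_reg_r (INR N)); [lra |]; unfold Rdiv; rewrite Rmult_assoc, Rinv_l by lra; nra. }
  destruct (Hk j ltac:(lra)), (Hk j' ltac:(lra)).
  apply cos_decreasing_1; try lra.
  unfold Rdiv; apply Rmult_lt_compat_r; [apply Rinv_0_lt_compat; lra | nra].
Qed.

Lemma cheb_le j j' : (j <= j')%nat -> (j' <= N)%nat -> cheb j' <= cheb j.
Proof.
  intros H1 H2; destruct (Nat.eq_dec j j') as [-> | Hne]; [lra |].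
  left; apply cheb_lt; lia.
Qed.

Lemma cheb_0 : cheb 0 = 1.
Proof. unfold cheb; simpl; unfold Rdiv; rewrite !Rmult_0_l; apply cos_0. Qed.

Lemma cheb_N : cheb N = -1.
Proof.
  unfold cheb; pose proof INR_N_pos.
  replace (INR N * PI / INR N) with PI by (field; lra); apply cos_PI.
Qed.

End ChebyshevPoints.

Section ChebyshevGapEstimates.
Variables N s : nat.
Hypothesis HsN : (s + 2 < N)%nat.

Let HN1 : (1 <= N)%nat. Proof. lia. Qed.

Definition Sbound : R := sin (INR (s + 1) * theta N).
Definition Rconst : R := (INR s + 1) * (INR s + 3) * PI ^ 2 / 4.

Lemma Sbound_pos : 0 < Sbound.
Proof.
  unfold Sbound; pose proof (theta_pos N HN1); apply sin_gt_0.
  - apply Rmult_lt_0_compat; [apply lt_0_INR; lia | lra].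
  - rewrite <- (theta_N N HN1).
    assert (INR (s + 1) < INR N) by (apply lt_INR; lia); pose proof (pos_INR N); nra.
Qed.

(* The only property of pi used here is pi^2 >= 9. *)
Lemma Rconst_ge : (INR s + 1) * (INR s + 3) <= 2 * Rconst /\ 2 * INR s * INR s <= 1 + Rconst.
Proof.
  unfold Rconst; pose proof PI2_3_2; pose proof (pos_INR s).
  assert (9 <= PI ^ 2) by nra.
  split; nra.
Qed.

Lemma sin_le_Sbound m : (m <= s + 1)%nat -> sin (INR m * theta N) <= Sbound.
Proof.
  intros Hm; unfold Sbound; pose proof (theta_pos N HN1); pose proof (theta_N N HN1).
  apply sin_le_mono.
  - apply Rmult_le_pos; [apply pos_INR | lra].
  - apply Rmult_le_compat_r; [lra | apply le_INR; exact Hm].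
  - assert (INR (s + 1) <= INR N) by (apply le_INR; lia); nra.
Qed.

Lemma gap_half j j' : (j < j')%nat -> (j' <= N)%nat -> (j' <= j + s + 1)%nat ->
  (cheb N j - cheb N j') / 2 <= Sbound.
Proof.
  intros H2 H3 H4; rewrite (cheb_diff N HN1), <- minus_INR by lia.
  pose proof (SIN_bound (INR (j + j') * theta N)).
  assert (0 <= sin (INR (j' - j) * theta N)) by (apply sin_theta_nonneg; lia).
  assert (sin (INR (j' - j) * theta N) <= Sbound) by (apply sin_le_Sbound; lia).
  assert (0 <= sin (INR (j + j') * theta N)) by (apply sin_theta_nonneg; lia).
  nra.
Qed.

Lemma interior_gap j j' : (1 <= j)%nat -> (j < j')%nat -> (j' <= N)%nat -> (j' <= j + s + 1)%nat ->
  let H := (cheb N j - cheb N j') / 2 in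
  H * H <= Rconst * Sbound * (cheb N (j - 1) - cheb N j).
Proof.
  intros H1 H2 H3 H4 H.
  pose proof (theta_pos N HN1); pose proof Sbound_pos; pose proof (pos_INR s).
  set (A := sin (INR (j + j') * theta N)); set (B := sin (INR (j' - j) * theta N)).
  set (P := sin (INR (2 * j - 1) * theta N)); set (Q := sin (theta N)).
  assert (HH : H = A * B).
  { unfold H; rewrite (cheb_diff N HN1); unfold A, B; rewrite minus_INR by lia; field. }
  assert (Hd : cheb N (j - 1) - cheb N j = 2 * P * Q).
  { rewrite (cheb_diff N HN1); unfold P, Q.
    replace (j - 1 + j)%nat with (2 * j - 1)%nat by lia.
    replace ((INR j - INR (j - 1)) * theta N) with (theta N)
      by (rewrite (minus_INR j 1) by lia; simpl; ring); ring. }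
  assert (HA0 : 0 <= A) by (apply sin_theta_nonneg; lia).
  assert (HA1 : A <= 1) by apply SIN_bound.
  assert (HB0 : 0 <= B) by (apply sin_theta_nonneg; lia).
  assert (HBS : B <= Sbound) by (apply sin_le_Sbound; lia).
  assert (HQ0 : 0 <= Q)
    by (unfold Q; replace (theta N) with (INR 1 * theta N) by (simpl; ring); apply sin_theta_nonneg; lia).
  assert (HQP : Q <= P) by (apply sin_theta_ge; lia).
  (* B <= (s + 1) Q and A <= (s + 3) P, by subadditivity of sine *)
  assert (HBQ : B <= (INR s + 1) * Q).
  { eapply Rle_trans; [apply (sin_theta_mult_le N HN1); lia |].
    apply Rmult_le_compat_r; [exact HQ0 |].
    replace (INR s + 1) with (INR (s + 1)) by (rewrite plus_INR; reflexivity); apply le_INR; lia. }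
  assert (HAP : A <= (INR s + 3) * P).
  { unfold A; replace (INR (j + j') * theta N)
      with (INR (2 * j - 1) * theta N + INR (j' - j + 1) * theta N)
      by (rewrite !plus_INR, !minus_INR, mult_INR by lia; simpl; ring).
    eapply Rle_trans; [apply sin_add_le; apply sin_theta_nonneg; lia |].
    assert (sin (INR (j' - j + 1) * theta N) <= INR (j' - j + 1) * Q)
      by (apply sin_theta_mult_le; lia).
    assert (INR (j' - j + 1) <= INR s + 2)
      by (replace (INR s + 2) with (INR (s + 2)) by (rewrite plus_INR; simpl; ring); apply le_INR; lia).
    fold P; nra. }
  destruct Rconst_ge as [HRc _].
  rewrite HH, Hd.
  apply Rle_trans with (A * (B * B)).
  { replace (A * B * (A * B)) with ((A * A) * (B * B)) by ring.
    apply Rmult_le_compat_r; [nra |]; assert (A * A <= A * 1) by (apply Rmult_le_compat_l; lra); lra. }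
  apply Rle_trans with ((INR s + 3) * P * (Sbound * ((INR s + 1) * Q))).
  { apply Rmult_le_compat; [lra | nra | lra | apply Rmult_le_compat; lra]. }
  assert (0 <= P * Q) by nra; assert (0 <= Sbound * (P * Q)) by nra; nra.
Qed.

Lemma endpoint_gap j : (1 <= j)%nat -> (j <= s)%nat ->
  1 / ((1 + Rconst) * Sbound) <= 1 / (1 - cheb N j) - 1 / (1 - cheb N (j + 1)).
Proof.
  intros H1 H2; pose proof (theta_pos N HN1); pose proof Sbound_pos as HS.
  set (sj := sin (INR j * theta N)); set (sj' := sin (INR (j + 1) * theta N)).
  set (P := sin (INR (2 * j + 1) * theta N)); set (Q := sin (theta N)).
  assert (E1 : 1 - cheb N j = 2 * sj * sj) by apply (one_sub_cheb N HN1).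
  assert (E2 : 1 - cheb N (j + 1) = 2 * sj' * sj') by apply (one_sub_cheb N HN1).
  assert (E3 : cheb N j - cheb N (j + 1) = 2 * P * Q).
  { rewrite (cheb_diff N HN1); unfold P, Q; replace (j + (j + 1))%nat with (2 * j + 1)%nat by lia.
    replace ((INR (j + 1) - INR j) * theta N) with (theta N) by (rewrite plus_INR; simpl; ring); ring. }
  assert (Hpos : forall m, (1 <= m <= s + 1)%nat -> 0 < sin (INR m * theta N)).
  { intros m Hm; apply sin_gt_0; [apply Rmult_lt_0_compat; [apply lt_0_INR; lia | lra] |].
    rewrite <- (theta_N N HN1).
    assert (INR m < INR N) by (apply lt_INR; lia); pose proof (pos_INR N); nra. }
  assert (Hsj : 0 < sj) by (apply Hpos; lia).
  assert (Hsj' : 0 < sj') by (apply Hpos; lia).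
  assert (HQ0 : 0 <= Q)
    by (unfold Q; replace (theta N) with (INR 1 * theta N) by (simpl; ring); apply sin_theta_nonneg; lia).
  assert (HQP : Q <= P) by (apply sin_theta_ge; lia).
  assert (Hsjq : sj <= INR j * Q) by (apply sin_theta_mult_le; lia).
  assert (Hsj'S : sj' <= Sbound) by (apply sin_le_Sbound; lia).
  assert (Hsj'1 : sj' <= 1) by apply SIN_bound.
  assert (Hj : INR j <= INR s) by (apply le_INR; exact H2).
  destruct Rconst_ge as [_ HRc].
  assert (Hjj : 2 * INR j * INR j <= 1 + Rconst) by (pose proof (pos_INR j); nra).
  assert (Hkey : (1 - cheb N j) * (1 - cheb N (j + 1))
                 <= (1 + Rconst) * Sbound * (cheb N j - cheb N (j + 1))).
  { rewrite E1, E2, E3.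
    apply Rle_trans with (4 * (INR j * Q) * (INR j * Q) * Sbound).
    { assert (sj * sj <= (INR j * Q) * (INR j * Q)) by nra.
      assert (sj' * sj' <= Sbound) by nra; nra. }
    assert (Q * Q <= P * Q) by nra; assert (0 <= Q * Q) by nra.
    assert (2 * INR j * INR j * (Q * Q) <= (1 + Rconst) * (P * Q)) by nra; nra. }
  assert (Hp1 : 0 < 1 - cheb N j) by (rewrite E1; nra).
  assert (Hp2 : 0 < 1 - cheb N (j + 1)) by (rewrite E2; nra).
  assert (HR : 0 < 1 + Rconst) by (pose proof (pos_INR j); nra).
  replace (1 / (1 - cheb N j) - 1 / (1 - cheb N (j + 1)))
    with ((cheb N j - cheb N (j + 1)) / ((1 - cheb N j) * (1 - cheb N (j + 1)))) by (field; lra).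
  apply (Rmult_le_reg_r ((1 + Rconst) * Sbound * ((1 - cheb N j) * (1 - cheb N (j + 1)))));
    [apply Rmult_lt_0_compat; nra |].
  replace (1 / ((1 + Rconst) * Sbound) * ((1 + Rconst) * Sbound * ((1 - cheb N j) * (1 - cheb N (j + 1)))))
    with ((1 - cheb N j) * (1 - cheb N (j + 1))) by (field; nra).
  replace ((cheb N j - cheb N (j + 1)) / ((1 - cheb N j) * (1 - cheb N (j + 1))) *
     ((1 + Rconst) * Sbound * ((1 - cheb N j) * (1 - cheb N (j + 1)))))
    with ((1 + Rconst) * Sbound * (cheb N j - cheb N (j + 1))) by (field; nra).
  exact Hkey.
Qed.

End ChebyshevGapEstimates.

Lemma Rconst_nonneg s : 0 <= Rconst s.
Proof.
  unfold Rconst; pose proof (pos_INR s); pose proof PI_RGT_0.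
  apply Rmult_le_pos; [apply Rmult_le_pos; [nra | simpl; nra] | lra].
Qed.

(* Elementary reciprocal inequalities turning the gap estimates into lower
   bounds for the dominant pair of terms of D(z). *)
Lemma recip_gap p g g0 Hh S R : 0 < p -> p <= Hh -> 0 < g0 -> g0 <= g -> Hh <= S ->
  Hh * Hh <= R * S * g0 -> 0 <= R -> 0 < S ->
  1 / ((1 + R) * S) <= 1 / p - 1 / (p + g).
Proof.
  intros Hp HpH Hg0 Hg HS HH HR HS0.
  assert (Hk : p * (p + g) <= (1 + R) * S * g).
  { assert (p * p <= Hh * Hh) by nra.
    assert (R * S * g0 <= R * S * g) by (apply Rmult_le_compat_l; nra).
    assert (p * g <= S * g) by nra; nra. }
  replace (1 / p - 1 / (p + g)) with (g / (p * (p + g))) by (field; lra).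
  apply (Rmult_le_reg_r ((1 + R) * S * (p * (p + g)))); [apply Rmult_lt_0_compat; nra |].
  replace (1 / ((1 + R) * S) * ((1 + R) * S * (p * (p + g)))) with (p * (p + g)) by (field; nra).
  replace (g / (p * (p + g)) * ((1 + R) * S * (p * (p + g)))) with ((1 + R) * S * g) by (field; nra).
  exact Hk.
Qed.

Lemma recip_single p Hh S R : 0 < p -> p <= Hh -> Hh <= S -> 0 <= R -> 0 < S ->
  1 / ((1 + R) * S) <= 1 / p.
Proof. intros; apply one_div_le_contravar; nra. Qed.

Lemma recip_end z A B B' : B < A -> A < z -> z <= 1 -> B <= B' -> B' < A ->
  1 / (1 - A) - 1 / (1 - B') <= 1 / (z - A) - 1 / (z - B).
Proof.
  intros.
  assert (1 / (1 - B) <= 1 / (1 - B')) by (apply one_div_le_contravar; lra).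
  assert (1 / (1 - A) - 1 / (1 - B) <= 1 / (z - A) - 1 / (z - B)).
  { replace (1 / (1 - A) - 1 / (1 - B)) with ((A - B) / ((1 - A) * (1 - B))) by (field; lra).
    replace (1 / (z - A) - 1 / (z - B)) with ((A - B) / ((z - A) * (z - B))) by (field; lra).
    unfold Rdiv; apply Rmult_le_compat_l; [lra |]; apply Rinv_le_contravar; nra. }
  lra.
Qed.
Section ChebyshevSubset.
Variables (N s : nat) (jj : nat -> nat).
Hypothesis HsN : (s + 2 < N)%nat.
Hypothesis Hjj : forall i, (i < N - s)%nat -> (jj i < jj (S i))%nat.
Hypothesis HjN : (jj (N - s) <= N)%nat.

Let n := (N - s)%nat.
Let HN1 : (1 <= N)%nat. Proof. lia. Qed.

Lemma jj_lower i : (i <= n)%nat -> (i <= jj i)%nat.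
Proof.
  induction i as [| i IH]; intros Hi; [lia |].
  specialize (Hjj i ltac:(unfold n in *; lia)); specialize (IH ltac:(lia)); lia.
Qed.

Lemma jj_upper i : (i <= n)%nat -> (jj i + (n - i) <= N)%nat.
Proof.
  intros Hi; remember (n - i)%nat as d eqn:Hd; revert i Hi Hd.
  induction d as [| d IH]; intros i Hi Hd.
  - replace i with n by lia; unfold n in *; lia.
  - specialize (IH (S i) ltac:(lia) ltac:(lia)); specialize (Hjj i ltac:(unfold n in *; lia)); lia.
Qed.

Lemma jj_step k : (k < n)%nat -> (jj k < jj (S k) <= jj k + s + 1)%nat.
Proof.
  intros Hk; pose proof (Hjj k ltac:(unfold n in *; lia)).
  pose proof (jj_upper (S k) Hk); pose proof (jj_lower k ltac:(lia)); unfold n in *; lia.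
Qed.

Definition node (i : nat) : R := cheb N (jj i).

Lemma node_decreasing i : (i < n)%nat -> node (S i) < node i.
Proof.
  intros Hi; pose proof (jj_step i Hi); pose proof (jj_upper (S i) Hi).
  apply cheb_lt; [exact HN1 | lia | lia].
Qed.

Let L := (1 + Rconst s) * Sbound N s.

Lemma L_pos : 0 < L.
Proof. pose proof (Sbound_pos N s HsN); pose proof (Rconst_nonneg s); unfold L; nra. Qed.

(* z above the top node: the top node is cos(j pi/N) with 1 <= j <= s. *)
Lemma Dsum_lower_above z : z <= 1 -> node 0%nat < z -> 1 / L <= Rabs (Dsum node n z).
Proof.
  intros Hz Htop.
  assert (Hj0 : (1 <= jj 0 <= s)%nat).
  { pose proof (jj_upper 0 ltac:(lia)); split; [| unfold n in *; lia].
    destruct (jj 0) eqn:E; [| lia]; exfalso.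
    unfold node in Htop; rewrite E, cheb_0 in Htop; lra. }
  pose proof (jj_step 0 ltac:(unfold n; lia)); pose proof (jj_upper 1 ltac:(unfold n; lia)).
  eapply Rle_trans; [| apply (Dsum_above node n z node_decreasing); [unfold n; lia | exact Htop]].
  eapply Rle_trans; [apply (endpoint_gap N s HsN (jj 0)); lia |].
  apply recip_end; try lra.
  - apply node_decreasing; unfold n; lia.
  - apply cheb_le; [exact HN1 | lia | unfold n in *; lia].
  - apply cheb_lt; [exact HN1 | lia | lia].
Qed.

Lemma Dsum_lower_below z : -1 <= z -> z < node n -> 1 / L <= Rabs (Dsum node n z).
Proof.
  intros Hz Hbot.
  pose proof (jj_step (n - 1) ltac:(unfold n; lia)) as Hstep.
  replace (S (n - 1)) with n in Hstep by (unfold n; lia).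
  set (j := (N - jj n)%nat).
  assert (Hj : (1 <= j <= s)%nat).
  { pose proof (jj_lower n (le_n n)); pose proof (jj_upper n (le_n n)); split; [| unfold j, n in *; lia].
    destruct (Nat.eq_dec (jj n) N) as [E | E]; [exfalso | unfold j; lia].
    unfold node in Hbot; rewrite E, cheb_N in Hbot by exact HN1; lra. }
  assert (E1 : node n = - cheb N j).
  { unfold node, j; rewrite <- (cheb_reflect N HN1) by lia; f_equal; pose proof (jj_upper n (le_n n)); lia. }
  assert (E2 : - cheb N (j + 1) <= node (n - 1)%nat).
  { unfold node; rewrite <- (cheb_reflect N HN1) by lia.
    apply cheb_le; [exact HN1 | unfold j; lia | pose proof (jj_upper n (le_n n)); lia]. }
  pose proof (node_decreasing (n - 1) ltac:(unfold n; lia)) as Hlast.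
  replace (S (n - 1)) with n in Hlast by (unfold n; lia).
  assert (cheb N (j + 1) < cheb N j) by (apply cheb_lt; [exact HN1 | lia | unfold j; lia]).
  eapply Rle_trans; [| apply (Dsum_below node n z node_decreasing); [unfold n; lia | exact Hbot]].
  eapply Rle_trans; [apply (endpoint_gap N s HsN j); lia |].
  pose proof (recip_end (- z) (- node n) (- node (n - 1)%nat) (cheb N (j + 1))) as Hend.
  rewrite E1 in *.
  replace (1 - - - cheb N j) with (1 - cheb N j) in Hend by ring.
  replace (- z - - - cheb N j) with (- cheb N j - z) in Hend by ring.
  replace (- z - - node (n - 1)%nat) with (node (n - 1)%nat - z) in Hend by ring.
  apply Hend; lra.
Qed.
(* z strictly between two consecutive nodes x_{k+1} < z < x_k: z is within
   H = (x_k - x_{k+1})/2 of one of them, and the dominant pair of terms on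
   that side of z is controlled by the Chebyshev gap estimates. *)
Lemma Dsum_lower_gap k z : (k < n)%nat -> node (S k) < z < node k ->
  1 / L <= Rabs (Dsum node n z).
Proof.
  intros Hk [Hz1 Hz2].
  pose proof L_pos as HL; pose proof (Rconst_nonneg s) as HR; pose proof (Sbound_pos N s HsN) as HS.
  destruct (Dsum_gap_split node n z node_decreasing k Hk (conj Hz1 Hz2))
    as (A & B & Habs & HA0 & HB0 & HA1 & HA2 & HB1 & HB2).
  rewrite Habs.
  set (j := jj k); set (j' := jj (S k)).
  pose proof (jj_step k Hk) as Hjj'; fold j j' in Hjj'.
  pose proof (jj_upper (S k) Hk) as Hj'N; fold j' in Hj'N.
  set (H := (cheb N j - cheb N j') / 2).
  assert (Ek : node k = cheb N j) by reflexivity.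
  assert (ESk : node (S k) = cheb N j') by reflexivity.
  assert (Hhalf : 2 * H = node k - node (S k)) by (unfold H; lra).
  assert (HH : H <= Sbound N s) by (apply gap_half; [exact HsN | lia | unfold n in *; lia | lia]).
  destruct (Rle_dec (node k - z) H) as [Hl | Hl].
  - (* z is near node k: use the nodes above z *)
    cut (1 / L <= A); [lra |].
    destruct k as [| k'].
    + rewrite HA1 by reflexivity; apply (recip_single _ H); lra.
    + pose proof (jj_step k' ltac:(lia)) as Hprev; fold j in Hprev.
      assert (Hj1 : (1 <= j)%nat) by lia.
      pose proof (interior_gap N s HsN j j' Hj1 ltac:(lia) ltac:(unfold n in *; lia) ltac:(lia)) as Hgap.
      fold H in Hgap.
      eapply Rle_trans; [| apply HA2; lia].
      replace (S k' - 1)%nat with k' by lia.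
      replace (1 / (node k' - z)) with (1 / ((node (S k') - z) + (node k' - node (S k'))))
        by (f_equal; ring).
      assert (F1 : cheb N j < cheb N (j - 1)) by (apply cheb_lt; [exact HN1 | lia | lia]).
      assert (F2 : cheb N (j - 1) <= node k') by (apply cheb_le; [exact HN1 | lia | lia]).
      apply (recip_gap _ _ (cheb N (j - 1) - cheb N j) H); lra.
  - (* z is near node (S k): use the nodes below z *)
    cut (1 / L <= B); [lra |].
    destruct (Nat.eq_dec (S k) n) as [E | E].
    + rewrite HB1 by exact E; rewrite <- E; apply (recip_single _ H); lra.
    + pose proof (jj_step (S k) ltac:(lia)) as Hnext; fold j' in Hnext.
      pose proof (jj_upper (S (S k)) ltac:(lia)).
      pose proof (interior_gap N s HsN (N - j') (N - j) ltac:(lia) ltac:(lia) ltac:(lia) ltac:(lia))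
        as Hgap.
      rewrite !(cheb_reflect N HN1) in Hgap by lia.
      replace (N - j' - 1)%nat with (N - (j' + 1))%nat in Hgap by lia.
      rewrite (cheb_reflect N HN1) in Hgap by lia.
      replace ((- cheb N j' - - cheb N j) / 2) with H in Hgap by (unfold H; field).
      replace (- cheb N (j' + 1) - - cheb N j') with (cheb N j' - cheb N (j' + 1)) in Hgap by ring.
      eapply Rle_trans; [| apply HB2; lia].
      replace (1 / (z - node (S (S k))))
        with (1 / ((z - node (S k)) + (node (S k) - node (S (S k))))) by (f_equal; ring).
      assert (F1 : cheb N (j' + 1) < cheb N j') by (apply cheb_lt; [exact HN1 | lia | unfold n in *; lia]).
      assert (F2 : node (S (S k)) <= cheb N (j' + 1)) by (apply cheb_le; [exact HN1 | lia | unfold n in *; lia]).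
      apply (recip_gap _ _ (cheb N j' - cheb N (j' + 1)) H); lra.
Qed.

Lemma Dsum_lower_bound z : -1 <= z <= 1 -> (forall i, (i <= n)%nat -> z <> node i) ->
  1 / L <= Rabs (Dsum node n z).
Proof.
  intros Hz Hnn.
  destruct (Rlt_dec (node 0%nat) z) as [Htop | Htop]; [apply Dsum_lower_above; lra |].
  destruct (Rlt_dec z (node n)) as [Hbot | Hbot]; [apply Dsum_lower_below; lra |].
  pose proof (Hnn 0%nat ltac:(lia)); pose proof (Hnn n (le_n n)).
  destruct (find_gap node n z Hnn ltac:(lra) ltac:(lra)) as [k [Hk Hzk]].
  exact (Dsum_lower_gap k z Hk Hzk).
Qed.
End ChebyshevSubset.

(* The numerator is an
   alternating sum of secant defects, Lipschitz with constant M2/2 in the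
   node: pairing consecutive terms bounds it by M2/2 times the spread of the
   nodes, i.e. by M2; for an even number of intervals one defect (<= M2) and
   the term g'(z) (<= M1) are left over. *)
Section GeneralErrorBound.
Variables (g g1 g2 : R -> R) (M1 M2 : R) (x : nat -> R) (n : nat) (z L : R).
Hypothesis Hg : forall t, -1 <= t <= 1 -> is_derive_I g t (g1 t).
Hypothesis Hg1 : forall t, -1 <= t <= 1 -> is_derive_I g1 t (g2 t).
Hypothesis HM1 : forall t, -1 <= t <= 1 -> Rabs (g1 t) <= M1.
Hypothesis HM2 : forall t, -1 <= t <= 1 -> Rabs (g2 t) <= M2.
Hypothesis Hx : forall i, -1 <= x i <= 1.
Hypothesis Hdec : forall i, (i < n)%nat -> x (S i) < x i.
Hypothesis Hn : (2 <= n)%nat.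
Hypothesis Hz : -1 <= z <= 1.
Hypothesis Hnn : forall i, (i <= n)%nat -> z <> x i.

Lemma error_numerator_bound :
  Rabs (sum_f_R0 (fun i => (-1) ^ i * secant_defect g g1 z (x i)) n
        + g1 z * sum_f_R0 (fun i => (-1) ^ i) n)
  <= if Nat.odd n then M2 else 2 * M2 + M1.
Proof.
  assert (HM2pos : 0 <= M2) by (pose proof (HM2 z Hz); pose proof (Rabs_pos (g2 z)); lra).
  assert (Hlip : forall i j, (i <= n)%nat -> (j <= n)%nat ->
     Rabs (secant_defect g g1 z (x i) - secant_defect g g1 z (x j)) <= M2 / 2 * Rabs (x i - x j)).
  { intros i j Hi Hj; apply (secant_defect_lipschitz g g1 g2 M2 Hg Hg1 HM2); auto;
      apply not_eq_sym, Hnn; assumption. }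
  assert (Hdec' : forall i, (i < n)%nat -> x (S i) <= x i) by (intros i Hi; left; apply Hdec, Hi).
  assert (Hpairs : forall m, (2 * m + 1 <= n)%nat ->
     Rabs (sum_f_R0 (fun i => (-1) ^ i * secant_defect g g1 z (x i)) (2 * m + 1)) <= M2).
  { intros m Hm.
    eapply Rle_trans; [apply (alternating_sum_pairs _ x (M2 / 2) n); auto; lra |].
    pose proof (Hx 0%nat); pose proof (Hx (2 * m + 1)%nat).
    assert (x (2 * m + 1)%nat - (-1) <= 2 /\ 1 - x (2 * m + 1)%nat >= 0) by lra; nra. }
  rewrite alternating_sum_ones.
  destruct (Nat.odd n) eqn:Hodd.
  - apply Nat.odd_spec in Hodd; destruct Hodd as [m ->].
    rewrite Rmult_0_r, Rplus_0_r; apply Hpairs; lia.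
  - assert (Hev : Nat.even n = true) by (rewrite <- Nat.negb_odd, Hodd; reflexivity).
    apply Nat.even_spec in Hev; destruct Hev as [m Hm].
    replace n with (S (2 * (m - 1) + 1)) at 1 by lia; rewrite tech5.
    replace (S (2 * (m - 1) + 1)) with n by lia.
    assert (Hlast : Rabs ((-1) ^ n * secant_defect g g1 z (x n)) <= M2).
    { rewrite Rabs_sign_mult.
      eapply Rle_trans;
        [apply (secant_defect_bound g g1 g2 M2 Hg Hg1 HM2); auto; apply not_eq_sym, Hnn; lia |].
      pose proof (Hx n); assert (Rabs (x n - z) <= 2) by (apply Rabs_le; lra); nra. }
    pose proof (Hpairs (m - 1)%nat ltac:(lia)); pose proof (HM1 z Hz).
    rewrite Rmult_1_r.
    eapply Rle_trans; [apply Rabs_triang |].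
    eapply Rle_trans; [apply Rplus_le_compat_r, Rabs_triang | lra].
Qed.

Lemma bary_error_bound : 0 < L -> 1 / L <= Rabs (Dsum x n z) ->
  Rabs (sum_f_R0 (fun i => ((-1) ^ i / (z - x i)) / Dsum x n z * g (x i)) n - g z)
  <= L * (if Nat.odd n then M2 else 2 * M2 + M1).
Proof.
  intros HL HD.
  assert (HDpos : 0 < Rabs (Dsum x n z)) by (assert (0 < 1 / L) by (apply Rdiv_lt_0_compat; lra); lra).
  assert (HD0 : Dsum x n z <> 0) by (intro H0; rewrite H0, Rabs_R0 in HDpos; lra).
  rewrite (bary_error_formula g g1 x n z Hnn HD0).
  unfold Rdiv; rewrite Rabs_mult, Rabs_Ropp, Rabs_inv, Rmult_comm.
  apply Rmult_le_compat; [left; apply Rinv_0_lt_compat; exact HDpos | apply Rabs_pos | | apply error_numerator_bound].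
  rewrite <- (Rinv_inv L); apply Rinv_le_contravar; [apply Rinv_0_lt_compat; exact HL |].
  unfold Rdiv in HD; rewrite Rmult_1_l in HD; exact HD.
Qed.

End GeneralErrorBound.

Theorem theorem8 (K N s : nat) (X : nat -> R) (f : R -> R)
  (jj : nat -> nat) (g1 g2 : R -> R) :
  (1 <= K)%nat ->
  (s + 2 < N)%nat ->
  (forall i, (i < N - s)%nat -> (jj i < jj (S i))%nat) ->
  (jj (N - s) <= N)%nat ->
  (forall z, -1 <= z <= 1 -> is_derive_I (fun t => f (u_enc K X t)) z (g1 z)) ->
  (forall z, -1 <= z <= 1 -> is_derive_I g1 z (g2 z)) ->
  (forall z, -1 <= z <= 1 -> continuous_I g2 z) ->
  let g := fun t => f (u_enc K X t) in
  let n := (N - s)%nat in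
  let zz := fun i => cos (INR (jj i) * PI / INR N) in
  let r := bary zz n (fun i => g (zz i)) in
  let Rc := (INR s + 1) * (INR s + 3) * PI ^ 2 / 4 in
  let C := 2 * (1 + Rc) * sin ((INR s + 1) * PI / (2 * INR N)) in
  forall z, -1 <= z <= 1 ->
    Rabs (r z - g z) <=
      (if Nat.odd (N - s) then C * supnorm g2
       else C * (supnorm g2 + supnorm g1)).
Proof.
  intros _ HsN Hjj HjN Hg Hg1 Hc2 g n zz r Rc C z Hz.
  set (L := (1 + Rconst s) * Sbound N s).
  assert (HL : 0 < L) by (apply L_pos; exact HsN).
  assert (HC : C = 2 * L).
  { unfold C, L, Rc, Rconst, Sbound, theta; rewrite plus_INR; simpl INR.
    replace ((INR s + 1) * PI / (2 * INR N)) with ((INR s + 1) * (PI / (2 * INR N)))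
      by (field; apply not_0_INR; lia).
    ring. }
  assert (HM1 := supnorm_ub g1 (fun t Ht => is_derive_I_continuous g1 t (g2 t) (Hg1 t Ht))).
  assert (HM2 := supnorm_ub g2 Hc2).
  pose proof (supnorm_nonneg g1); pose proof (supnorm_nonneg g2).
  change (Nat.odd (N - s)) with (Nat.odd n); unfold r, bary.
  destruct (node_index zz n z) as [k |] eqn:E.
  -
    rewrite <- (node_index_some zz n z k E), Rminus_diag, Rabs_R0.
    destruct (Nat.odd n); rewrite HC; nra.
  - assert (Hnn := node_index_none zz n z E).
    eapply Rle_trans.
    + apply (bary_error_bound g g1 g2 (supnorm g1) (supnorm g2) zz n z L); auto.
      * intros; apply COS_bound.
      * exact (node_decreasing N s jj HsN Hjj HjN).
      * unfold n; lia.
      * exact (Dsum_lower_bound N s jj HsN Hjj HjN z Hz Hnn).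
    + destruct (Nat.odd n); rewrite HC; nra.
Qed.
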